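(* Let $\mathcal{X}$ be a finite set, $\mathcal{Y}$ a set with two elements, and $(X,Y)$ random variables on $\mathcal{X}\times\mathcal{Y}$ with joint distribution $P_{X,Y}$ which are not independent, so that $P_{X,Y}(x,y) = P_X(x)P_Y(y)\left(1+\varrho f^*(x)g^*(y)\right)$ for some $\varrho>0$, $f^*\in\mathcal{F}_{\mathcal{X}}$, $g^*:\mathcal{Y}\to\mathbb{R}$ with $\mathbb{E}[f^*(X)^2]=\mathbb{E}[g^*(Y)^2]=1$. Then for each (nonzero, finite-dimensional) subspace $\mathcal{G}$ of $\mathcal{F}_{\mathcal{X}}$, $$\mathrm{H}(\mathcal{G}) = \frac{\varrho^2}{2}\left\|\Pi(f^*;\mathcal{G})\right\|^2 = \max_{f\in\mathcal{G}}\mathrm{H}(f) = \mathrm{H}(\Pi(f^*;\mathcal{G})),$$ where the maximum is over (nonzero) one-dimensional features $f\in\mathcal{G}$.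
   Context: $\mathcal{F}_{\mathcal{X}}$ is the space of functions $\mathcal{X}\to\mathbb{R}$ with inner product $\langle f_1,f_2\rangle=\mathbb{E}_{P_X}[f_1(X)f_2(X)]$ and norm $\|f\|=\sqrt{\langle f,f\rangle}$; $\Pi(f;\mathcal{G}) = \arg\min_{h\in\mathcal{G}}\|h-f\|$. For $f:\mathcal{X}\to\mathbb{R}^d$, $\Lambda_f = \mathbb{E}[f(X)f^{\mathrm{T}}(X)]$, $\tilde f(x)=f(x)-\mathbb{E}[f(X)]$, and the H-score (for nonsingular $\Lambda_f$) is $\mathrm{H}(f) = \frac12\mathbb{E}\left[\left\|\mathbb{E}[\Lambda_f^{-1/2}\tilde f(X)\mid Y]\right\|^2\right]$. For a subspace $\mathcal{G}$, $\mathrm{H}(\mathcal{G})$ denotes $\mathrm{H}(f)$ for any $f$ whose components form a basis of $\mathcal{G}$; this does not depend on the choice of basis. *)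

From HB Require Import structures.
From mathcomp Require Import all_boot all_order all_algebra.
From mathcomp Require Import reals.
Set Implicit Arguments. Unset Strict Implicit. Unset Printing Implicit Defensive.
Import Order.TTheory GRing.Theory Num.Theory.
Local Open Scope ring_scope.

Section HScore.
Variables (R : realType) (X : finType).
(* joint pmf of (X,Y) with Y valued in the two-element set bool *)
Variable P : X -> bool -> R.

Definition PX (x : X) : R := \sum_(y : bool) P x y.
Definition PY (y : bool) : R := \sum_(x : X) P x y.

Definition EX (f : X -> R) : R := \sum_(x : X) PX x * f x.
Definition inner (f1 f2 : X -> R) : R := \sum_(x : X) PX x * (f1 x * f2 x).
Definition fnorm (f : X -> R) : R := Num.sqrt (inner f f).

(* a d-dimensional feature f : X -> R^d given by its components F i *)
Definition Lambda (d : nat) (F : 'I_d -> X -> R) : 'M[R]_d :=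
  \matrix_(i, j) inner (F i) (F j).
Definition condE (d : nat) (F : 'I_d -> X -> R) (y : bool) : 'cV[R]_d :=
  \col_i ((\sum_(x : X) P x y * (F i x - EX (F i))) / PY y).
(* H(f) = 1/2 E[ || Lambda^{-1/2} E[ftilde(X)|Y] ||^2 ]
        = 1/2 E[ E[ftilde|Y]^T Lambda^{-1} E[ftilde|Y] ] *)
Definition Hscore (d : nat) (F : 'I_d -> X -> R) : R :=
  2^-1 * \sum_(y : bool) PY y *
    ((condE F y)^T *m invmx (Lambda F) *m condE F y) ord0 ord0.

Definition H1 (f : X -> R) : R := Hscore (fun _ : 'I_1 => f).

Definition HG (G : {vspace {ffun X -> R^o}}) : R :=
  Hscore (fun i : 'I_(\dim G) => (fun x : X => (tnth (vbasis G) i) x : R)).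

End HScore.

(* Under the modal decomposition P(x,y) = P_X(x) P_Y(y) (1 + rho f*(x) g*(y)), the
   centred conditional expectation of a feature F given Y = y is rho g*(y) times the
   vector a of covariances <f*, F_i>, so H(F) = rho^2/2 a^T Lambda_F^-1 a.  Since the
   projection p of f* onto G satisfies <f*, h> = <p, h> on G, for a basis F of G one has
   a = Lambda_F c with p = sum_i c_i F_i, whence H(G) = rho^2/2 c^T Lambda_F c
   = rho^2/2 ||p||^2.  For a single feature f in G, H(f) = rho^2/2 <p, f>^2 / ||f||^2,
   which by Cauchy-Schwarz is at most rho^2/2 ||p||^2, with equality at f = p. *)
From HB Require Import structures.
From mathcomp Require Import all_boot all_order all_algebra.
From mathcomp Require Import reals ring lra.
Set Implicit Arguments. Unset Strict Implicit. Unset Printing Implicit Defensive.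
Import Order.TTheory GRing.Theory Num.Theory.
Local Open Scope ring_scope.

Lemma quadratic_ge0_discr (R : realFieldType) (a b c : R) : 0 <= c ->
  (forall t, 0 <= a + 2 * b * t + c * t ^+ 2) -> b ^+ 2 <= a * c.
Proof.
move=> c_ge0 q_ge0; have [c0|c_neq0] := eqVneq c 0.
  have [b0|b_neq0] := eqVneq b 0; first by rewrite b0 c0 expr0n mulr0.
  have := q_ge0 (- (a + 1) / (2 * b)); rewrite c0 mul0r addr0.
  have -> : a + 2 * b * (- (a + 1) / (2 * b)) = -1 by field; rewrite ?b_neq0 ?pnatr_eq0.
  by rewrite oppr_ge0 ler10.
have c_gt0 : 0 < c by rewrite lt_def c_neq0.
have := q_ge0 (- b / c).
have -> : a + 2 * b * (- b / c) + c * (- b / c) ^+ 2 = (a * c - b ^+ 2) / c by field.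
by rewrite pmulr_lge0 ?invr_gt0 // subr_ge0.
Qed.

Section InnerProduct.
Variables (R : realType) (X : finType) (P : X -> bool -> R).
Implicit Types (f g h : X -> R).

Lemma eq_inner f f' g g' : f =1 f' -> g =1 g' -> inner P f g = inner P f' g'.
Proof. by move=> eq_f eq_g; apply: eq_bigr => x _; rewrite eq_f eq_g. Qed.

Lemma innerC f g : inner P f g = inner P g f.
Proof. by apply: eq_bigr => x _; rewrite [f x * _]mulrC. Qed.

Lemma inner_subl f g h :
  inner P (fun x => f x - g x) h = inner P f h - inner P g h.
Proof. by rewrite /inner -sumrB; apply: eq_bigr => x _; ring. Qed.

Lemma inner_suml n (c : 'I_n -> R) (F : 'I_n -> X -> R) g :
  inner P (fun x => \sum_i c i * F i x) g = \sum_i c i * inner P (F i) g.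
Proof.
rewrite /inner; under eq_bigr do rewrite mulr_suml mulr_sumr.
rewrite exchange_big; apply: eq_bigr => i _; rewrite mulr_sumr.
by apply: eq_bigr => x _; ring.
Qed.

Lemma inner_addZ f g t :
  inner P (fun x => f x + t * g x) (fun x => f x + t * g x)
  = inner P f f + 2 * inner P f g * t + inner P g g * t ^+ 2.
Proof.
rewrite /inner -mulrA mulrC !mulr_suml -!big_split /=.
by apply: eq_bigr => x _; ring.
Qed.

Lemma Lambda_form n (F : 'I_n -> X -> R) (u : 'cV[R]_n) :
  (u^T *m Lambda P F *m u) 0 0
  = inner P (fun x => \sum_i u i 0 * F i x) (fun x => \sum_i u i 0 * F i x).
Proof.
rewrite inner_suml mxE; apply: eq_bigr => j _; rewrite !mxE mulrC; congr (_ * _).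
rewrite innerC inner_suml; apply: eq_bigr => i _.
by rewrite !mxE innerC mulrC.
Qed.

Lemma trmx_Lambda n (F : 'I_n -> X -> R) : (Lambda P F)^T = Lambda P F.
Proof. by apply/matrixP => i j; rewrite !mxE innerC. Qed.

Lemma Lambda_mx1 f : Lambda P (fun _ : 'I_1 => f) = (inner P f f)%:M.
Proof. by rewrite [LHS]mx11_scalar mxE. Qed.

Hypothesis PX_ge0 : forall x, 0 <= PX P x.

Lemma inner_ge0 f : 0 <= inner P f f.
Proof. by apply: sumr_ge0 => x _; rewrite mulr_ge0 // -expr2 sqr_ge0. Qed.

Lemma inner_CauchySchwarz f g : inner P f g ^+ 2 <= inner P f f * inner P g g.
Proof.
apply: quadratic_ge0_discr; first exact: inner_ge0.
by move=> t; rewrite -inner_addZ inner_ge0.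
Qed.

(* ||p + t h - f||^2 >= ||p - f||^2 for every t forces the linear coefficient to vanish. *)
Lemma fnorm_min_orthogonal (G : {vspace {ffun X -> R^o}}) (p : {ffun X -> R^o}) f :
  p \in G ->
  (forall h : {ffun X -> R^o}, h \in G ->
     fnorm P (fun x => p x - f x) <= fnorm P (fun x => h x - f x)) ->
  forall h : {ffun X -> R^o}, h \in G -> inner P (fun x => p x - f x) (fun x => h x) = 0.
Proof.
move=> pG p_min h hG; set e := fun x => p x - f x.
suff : inner P e (fun x => h x) ^+ 2 <= 0 * inner P (fun x => h x) (fun x => h x).
  by rewrite mul0r exprn_even_le0 //= => /eqP.
apply: quadratic_ge0_discr => [|t]; first exact: inner_ge0.
have := p_min (p + t *: h); rewrite memvD ?memvZ // => /(_ isT).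
rewrite /fnorm ler_sqrt ?inner_ge0 //.
have -> : inner P (fun x => (p + t *: h) x - f x) (fun x => (p + t *: h) x - f x)
        = inner P (fun x => e x + t * h x) (fun x => e x + t * h x).
  by apply: eq_inner => x; rewrite !ffunE addrAC.
by rewrite inner_addZ; lra.
Qed.

Hypothesis PX_gt0 : forall x, 0 < PX P x.

Lemma inner_eq0 f : inner P f f = 0 -> f =1 (fun=> 0).
Proof.
move/eqP; rewrite psumr_eq0 => [/allP f0 x|x _]; last first.
  by apply: mulr_ge0; [exact: ltW (PX_gt0 x) | rewrite -expr2 sqr_ge0].
have := f0 x (mem_index_enum x).
by rewrite -expr2 mulf_eq0 (gt_eqF (PX_gt0 x)) sqrf_eq0 => /eqP.
Qed.

Lemma Lambda_unitmx n (F : 'I_n -> X -> R) :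
  (forall u : 'cV[R]_n, (forall x, \sum_i u i 0 * F i x = 0) -> u = 0) ->
  Lambda P F \in unitmx.
Proof.
move=> F_free; rewrite -row_free_unit -kermx_eq0; apply/eqP/row_matrixP => i.
set r := row i _; have rL : r *m Lambda P F = 0 by rewrite -row_mul mulmx_ker row0.
have := Lambda_form F r^T; rewrite trmxK rL mul0mx mxE => /esym/inner_eq0 r0.
by rewrite row0 -[r]trmxK (F_free _ r0) trmx0.
Qed.

End InnerProduct.

Section VbasisPointwise.
Variables (K : fieldType) (X : finType) (G : {vspace {ffun X -> K^o}}).
Let b (i : 'I_(\dim G)) : X -> K := fun x => tnth (vbasis G) i x.

Lemma vbasis_free_pointwise (u : 'cV[K]_(\dim G)) :
  (forall x, \sum_i u i 0 * b i x = 0) -> u = 0.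
Proof.
move=> u0; have /freeP u_coef0 := basis_free (vbasisP G).
suff comb0 : \sum_i u i 0 *: (vbasis G)`_i = 0.
  by apply/matrixP => i j; rewrite ord1 mxE (u_coef0 _ comb0).
apply/ffunP => x; rewrite sum_ffunE [RHS]ffunE -[RHS](u0 x).
by apply: eq_bigr => i _; rewrite ffunE /b (tnth_nth 0).
Qed.

Lemma coord_vbasis_pointwise (p : {ffun X -> K^o}) x : p \in G ->
  p x = \sum_i coord (vbasis G) i p * b i x.
Proof.
move=> pG; rewrite {1}(coord_vbasis pG) sum_ffunE.
by apply: eq_bigr => i _; rewrite ffunE /b (tnth_nth 0).
Qed.

End VbasisPointwise.

Section ModalDecomposition.
Variables (R : realType) (X : finType) (P : X -> bool -> R).
Variables (rho : R) (fs : X -> R) (gs : bool -> R).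
Hypothesis P_sum1 : \sum_x \sum_y P x y = 1.
Hypothesis gs_norm : \sum_y PY P y * gs y ^+ 2 = 1.
Hypothesis P_decomp : forall x y, P x y = PX P x * PY P y * (1 + rho * fs x * gs y).

Lemma PY_decomp y : PY P y = PY P y * (1 + rho * gs y * EX P fs).
Proof.
rewrite {1}/PY; under eq_bigr do rewrite P_decomp.
have -> : PY P y * (1 + rho * gs y * EX P fs)
        = PY P y * \sum_x PX P x + PY P y * rho * gs y * EX P fs.
  by rewrite [\sum_x PX P x]P_sum1; ring.
by rewrite /EX !mulr_sumr -big_split /=; apply: eq_bigr => x _; ring.
Qed.

(* Multiply [PY y * rho * gs y * E[fs] = 0] by [gs y] and sum over [y]. *)
Lemma EX_fs_eq0 : rho != 0 -> EX P fs = 0.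
Proof.
move=> rho_neq0; have rho_E0 : rho * EX P fs = 0.
  rewrite -[LHS]mulr1 -gs_norm mulr_sumr big1 // => y _.
  transitivity (gs y * (PY P y * (1 + rho * gs y * EX P fs) - PY P y)); first ring.
  by rewrite -PY_decomp subrr mulr0.
by move/eqP: rho_E0; rewrite mulf_eq0 (negPf rho_neq0) => /eqP.
Qed.

Hypothesis fs_centred : EX P fs = 0.

Definition fs_cov d (F : 'I_d -> X -> R) : 'cV[R]_d := \col_i inner P fs (F i).

Lemma sum_P_centred f y :
  \sum_x P x y * (f x - EX P f) = PY P y * rho * gs y * inner P fs f.
Proof.
set E := EX P f; under eq_bigr do rewrite P_decomp.
transitivity (PY P y * (EX P f - E * \sum_x PX P x)
              + PY P y * rho * gs y * (inner P fs f - E * EX P fs)); last first.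
  by rewrite [\sum_x PX P x]P_sum1 fs_centred /E; ring.
rewrite /EX /inner !mulr_sumr -!sumrB !mulr_sumr -big_split /=.
by apply: eq_bigr => x _; ring.
Qed.

Lemma condE_decomp d (F : 'I_d -> X -> R) y : PY P y != 0 ->
  condE P F y = (rho * gs y) *: fs_cov F.
Proof.
by move=> PY_neq0; apply/matrixP => i j; rewrite !mxE sum_P_centred; field.
Qed.

Lemma Hscore_decomp d (F : 'I_d -> X -> R) :
  Hscore P F = rho ^+ 2 / 2 * ((fs_cov F)^T *m invmx (Lambda P F) *m fs_cov F) 0 0.
Proof.
set q := (_ *m _ *m _) 0 0; rewrite /Hscore.
transitivity (2^-1 * \sum_y PY P y * gs y ^+ 2 * (rho ^+ 2 * q)); last first.
  by rewrite -mulr_suml gs_norm; ring.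
congr (_ * _); apply: eq_bigr => y _.
have [->|PY_neq0] := eqVneq (PY P y) 0; first by rewrite !mul0r.
rewrite condE_decomp // [(_ *: _)^T]linearZ /= -!scalemxAl -scalemxAr scalerA mxE -/q.
by ring.
Qed.

Lemma H1_decomp f : H1 P f = rho ^+ 2 / 2 * (inner P fs f ^+ 2 / inner P f f).
Proof.
rewrite /H1 Hscore_decomp Lambda_mx1 invmx_scalar mul_mx_scalar -scalemxAl mxE.
by rewrite !mxE big_ord1 !mxE; congr (_ * _); ring.
Qed.

Section Projection.
Hypothesis PX_gt0 : forall x, 0 < PX P x.
Variables (G : {vspace {ffun X -> R^o}}) (p : {ffun X -> R^o}).
Hypothesis p_in_G : p \in G.
Hypothesis p_min : forall h : {ffun X -> R^o}, h \in G ->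
  fnorm P (fun x => p x - fs x) <= fnorm P (fun x => h x - fs x).

Let PX_ge0 x : 0 <= PX P x := ltW (PX_gt0 x).

Lemma inner_fs_proj (h : {ffun X -> R^o}) : h \in G ->
  inner P fs (fun x => h x) = inner P (fun x => p x) (fun x => h x).
Proof.
move=> hG; apply/eqP; rewrite eq_sym -subr_eq0 -inner_subl.
by rewrite (fnorm_min_orthogonal PX_ge0 p_in_G p_min hG).
Qed.

(* With [p = sum_i c_i b_i] in the basis [b], orthogonality gives [fs_cov b = Lambda b c]. *)
Lemma HG_proj : HG P G = rho ^+ 2 / 2 * inner P (fun x => p x) (fun x => p x).
Proof.
set b := fun i : 'I_(\dim G) => fun x => tnth (vbasis G) i x : R.
set c : 'cV[R]_(\dim G) := \col_i coord (vbasis G) i p.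
have p_comb : inner P (fun x => p x) =1 inner P (fun x => \sum_i c i 0 * b i x).
  move=> g; apply: eq_inner => // x.
  by rewrite (coord_vbasis_pointwise x p_in_G); apply: eq_bigr => i _; rewrite mxE.
have L_unit : Lambda P b \in unitmx.
  by apply: (Lambda_unitmx PX_gt0 (F := b)) => u; apply: vbasis_free_pointwise.
have cov_E : fs_cov b = Lambda P b *m c.
  apply/matrixP => i j; rewrite ord1 !mxE inner_fs_proj ?vbasis_mem ?mem_tnth //.
  rewrite p_comb inner_suml; apply: eq_bigr => k _.
  by rewrite !mxE innerC mulrC.
rewrite /HG -/b Hscore_decomp cov_E trmx_mul trmx_Lambda -!mulmxA mulKmx //.
by rewrite mulmxA Lambda_form p_comb [inner _ _ (fun x => p x)]innerC p_comb.
Qed.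

Lemma H1_le_proj (f : {ffun X -> R^o}) : f \in G ->
  H1 P (fun x => f x) <= rho ^+ 2 / 2 * inner P (fun x => p x) (fun x => p x).
Proof.
move=> fG; rewrite H1_decomp inner_fs_proj //.
apply: ler_wpM2l; first by rewrite divr_ge0 ?sqr_ge0.
have [->|ff_neq0] := eqVneq (inner P (fun x => f x) (fun x => f x)) 0.
  by rewrite invr0 mulr0 inner_ge0.
rewrite ler_pdivrMr ?lt_def ?ff_neq0 ?inner_ge0 //.
exact: inner_CauchySchwarz.
Qed.

Lemma H1_proj : H1 P (fun x => p x) = rho ^+ 2 / 2 * inner P (fun x => p x) (fun x => p x).
Proof.
rewrite H1_decomp inner_fs_proj //; congr (_ * _).
have [->|pp_neq0] := eqVneq (inner P (fun x => p x) (fun x => p x)) 0.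
  by rewrite invr0 mulr0.
by rewrite expr2 mulfK.
Qed.

Lemma exists_H1_proj : G != 0%VS ->
  exists2 f : {ffun X -> R^o}, (f \in G) && (f != 0) &
    H1 P (fun x => f x) = rho ^+ 2 / 2 * inner P (fun x => p x) (fun x => p x).
Proof.
move=> G_neq0; have [p0|p_neq0] := eqVneq p 0; last first.
  by exists p; rewrite ?p_in_G ?p_neq0 ?H1_proj.
have inner_p0 g : inner P (fun x => p x) g = 0.
  by apply: big1 => x _; rewrite p0 ffunE !mul0r mulr0.
exists (vpick G); first by rewrite memv_pick vpick0 G_neq0.
by rewrite H1_decomp inner_fs_proj ?memv_pick // !inner_p0 expr0n !mul0r mulr0.
Qed.

End Projection.

End ModalDecomposition.

Theorem proposition3 (R : realType) (X : finType) (P : X -> bool -> R)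
  (rho : R) (fs : X -> R) (gs : bool -> R) (G : {vspace {ffun X -> R^o}}) :
  (forall x y, 0 <= P x y) ->
  \sum_(x : X) \sum_(y : bool) P x y = 1 ->
  (forall x, 0 < PX P x) ->
  (exists x y, P x y != PX P x * PY P y) ->
  0 < rho ->
  EX P (fun x => fs x ^+ 2) = 1 ->
  \sum_(y : bool) PY P y * gs y ^+ 2 = 1 ->
  (forall x y, P x y = PX P x * PY P y * (1 + rho * fs x * gs y)) ->
  G != 0%VS ->
  forall p : {ffun X -> R^o},
    p \in G ->
    (forall h : {ffun X -> R^o}, h \in G ->
       fnorm P (fun x => (p x : R) - fs x) <= fnorm P (fun x => (h x : R) - fs x)) ->
    let v := rho ^+ 2 / 2 * fnorm P (fun x => p x : R) ^+ 2 in
    [/\ HG P G = v,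
        (forall f : {ffun X -> R^o}, f \in G -> f != 0 -> H1 P (fun x => f x : R) <= v),
        (exists2 f : {ffun X -> R^o}, (f \in G) && (f != 0) & H1 P (fun x => f x : R) = v)
      & H1 P (fun x => p x : R) = v].
Proof.
move=> _ P_sum1 PX_gt0 _ rho_gt0 _ gs_norm P_decomp G_neq0 p p_in_G p_min v.
have fs_centred := EX_fs_eq0 P_sum1 gs_norm P_decomp (lt0r_neq0 rho_gt0).
have -> : v = rho ^+ 2 / 2 * inner P (fun x => p x) (fun x => p x).
  by rewrite /v /fnorm sqr_sqrtr // inner_ge0 // => x; apply: ltW.
split.
- exact: (HG_proj P_sum1 gs_norm P_decomp fs_centred PX_gt0 p_in_G p_min).
- move=> f f_in_G _.
  exact: (H1_le_proj P_sum1 gs_norm P_decomp fs_centred PX_gt0 p_in_G p_min f_in_G).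
- exact: (exists_H1_proj P_sum1 gs_norm P_decomp fs_centred PX_gt0 p_in_G p_min G_neq0).
- exact: (H1_proj P_sum1 gs_norm P_decomp fs_centred PX_gt0 p_in_G p_min).
Qed.
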